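(* Let $A\in\mathcal{C}^{\mathrm{clq}}$ be such that $\mathbf{A}:=\mathcal{G}(A)$ is $(n-1)$-pure. Let $\widehat{B}\in\mathcal{C}^{\mathrm{geo}}$ be such that $\mathbf{A}^{\mathrm{geo}}\le\widehat{B}$. Then there exists $B\in\mathcal{C}^{\mathrm{clq}}$ such that $A\le B$, $\mathcal{G}(B)$ is $(n-1)$-pure, and $(\mathcal{G}(B))^{\mathrm{geo}}=\widehat{B}$.
   Context: Fix a natural number $n$ and a symmetric irreflexive $n$-ary relation symbol $S$; substructures are induced. For an $\{S\}$-structure $A$, $K\subseteq A$ with $|K|\ge n$ is a clique if all $n$-element subsets of $K$ (as tuples of distinct elements) lie in $S^A$; maximal cliques are those not properly contained in another clique; $\mathcal{M}(A)$ is the set of maximal cliques. For finite $X$, $|X|_*=\max\{0,|X|-(n-1)\}$; for finite $A$, $\delta_s(A)=|A|-\sum_{K\in\mathcal{M}(A)}|K|_*$; for finite $B\subseteq A$, $\delta_s(A/B)=\delta_s(A)-\delta_s(B)$; $B\le A$ means $B$ is a substructure of $A$ and $\delta_s(X/B)\ge0$ for all finite $X$ with $B\subseteq X\subseteq A$. $\mathcal{C}^{\mathrm{clq}}_0$ is the class of finite $\{S\}$-structures in which distinct maximal cliques intersect in fewer than $n$ points; $\mathcal{C}^{\mathrm{clq}}$ is the class of $A\in\mathcal{C}^{\mathrm{clq}}_0$ with $\{a\}\le A$ for all $a\in A$. For an $\{S\}$-structure $A$ with $\{a\}\le A$ for all $a\in A$, the associated geometry $\mathcal{G}(A)$ is the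 geometry (finitary matroid with $\mathrm{cl}(\emptyset)=\emptyset$ and singletons closed) on the universe of $A$ with dimension function $d(X)=\inf\{\delta_s(Y):X\subseteq Y\subseteq A,\ Y\text{ finite}\}$ for finite $X$. A geometry is $m$-pure if $m$ is the maximal natural number such that every $m$-element subset is independent. For a geometry $\mathbf{A}$ on $A$, $\mathbf{A}^{\mathrm{geo}}$ is the $\{S\}$-structure on $A$ whose maximal cliques are exactly the sets $\mathrm{cl}_{\mathbf{A}}(C)$ with $C\in[A]^{n-1}$ and $\mathrm{cl}_{\mathbf{A}}(C)\ne C$. An $\{S\}$-structure $A$ is geometric if whenever $X\subseteq A$, $|X|\ge n$ and $\delta_s(X)<n$, there is a unique $K\in\mathcal{M}(A)$ with $X\subseteq K$; $\mathcal{C}^{\mathrm{geo}}$ is the class of finite geometric $\{S\}$-structures. *)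

From mathcomp Require Import all_boot all_order all_algebra.
Set Implicit Arguments. Unset Strict Implicit. Unset Printing Implicit Defensive.
Import Order.TTheory GRing.Theory Num.Theory.
Local Open Scope ring_scope.

(* An {S}-structure (S symmetric irreflexive n-ary) inside an ambient finite
   type T: a universe [carrier] and the relation S, represented as the set of
   n-element subsets {a1,..,an} such that (a1,..,an) is in S. *)
Record structure (T : finType) := Struc {
  carrier : {set T};
  rel : {set {set T}} }.

Section Defs.
Variables (n : nat) (T : finType).
Implicit Types (A B : structure T) (X Y K : {set T}).

Definition wf A : bool :=
  [forall e in rel A, (#|e| == n)%N && (e \subset carrier A)].

Definition induced A X : structure T :=
  Struc X [set e in rel A | e \subset X].

Definition substructure B A : bool :=
  (carrier B \subset carrier A) &&
  (rel B == [set e in rel A | e \subset carrier B]).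

Definition clique A K : bool :=
  [&& K \subset carrier A, (n <= #|K|)%N &
   [forall e : {set T}, ((e \subset K) && (#|e| == n)%N) ==> (e \in rel A)]].

Definition maxclique A K : bool :=
  clique A K && [forall K' : {set T}, clique A K' ==> ~~ (K \proper K')].

Definition mcliques A : {set {set T}} := [set K | maxclique A K].

Definition starcard X : int := Order.max 0 (#|X|%:Z - (n%:Z - 1)).

Definition delta A : int :=
  #|carrier A|%:Z - \sum_(K in mcliques A) starcard K.

Definition strong B A : bool :=
  substructure B A &&
  [forall X : {set T}, ((carrier B \subset X) && (X \subset carrier A)) ==>
     (0 <= delta (induced A X) - delta B)].

Definition Cclq0 A : bool :=
  wf A && [forall K1 in mcliques A, forall K2 in mcliques A,
             (K1 != K2) ==> (#|K1 :&: K2| < n)%N].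

Definition Cclq A : bool :=
  Cclq0 A && [forall a in carrier A, strong (induced A [set a]) A].

Definition dim A X : int :=
  \big[Order.min/delta (induced A X)]_(Y in powerset (carrier A) | X \subset Y)
     delta (induced A Y).

Definition cl A X : {set T} :=
  [set a in carrier A | dim A (X :|: [set a]) == dim A X].

Definition indep A X : bool := dim A X == #|X|%:Z.

Definition pure A (m : int) : Prop :=
  0 <= m /\
  (forall X, X \subset carrier A -> #|X|%:Z = m -> indep A X) /\
  (exists X, [/\ X \subset carrier A, #|X|%:Z = m + 1 & ~~ indep A X]).

(* Ag is the structure A^geo associated to the geometry G(A) *)
Definition geo_of A Ag : Prop :=
  [/\ carrier Ag = carrier A, wf Ag &
      mcliques Ag = [set cl A C | C in
        [set C in powerset (carrier A) |
           (#|C|%:Z == n%:Z - 1) && (cl A C != C)]]].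

Definition geometric A : bool :=
  [forall X : {set T}, [&& X \subset carrier A, (n <= #|X|)%N &
       delta (induced A X) < n%:Z] ==>
     (#|[set K in mcliques A | X \subset K]| == 1)%N].

Definition Cgeo A : bool := wf A && geometric A.

End Defs.

From Pilot Require Import Defs.
From mathcomp Require Import all_boot all_order all_algebra.
From mathcomp Require Import zify.
Import Order.TTheory GRing.Theory Num.Theory.
Local Open Scope ring_scope.
Set Implicit Arguments. Unset Strict Implicit. Unset Printing Implicit Defensive.
Local Notation rel := Defs.rel.
Local Notation dim := Defs.dim.

(* B has the universe of Bh; its edges are those of A together with all n-sets of
   trim K, for K a maximal clique of Bh, where trim K drops all but min(n-1, |K :&: A|)
   of the points of K in A.  No new edge lies inside A, so A is an induced substructure of
   B, and (for n >= 2) the maximal cliques of B are those of A and the large trim K, whence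
   delta_B(Y) = |Y| - sum_M |M :&: Y|_* - sum_K |trim K :&: Y|_*.  Comparing this clique by
   clique with the same formula for Bh gives delta_Bh <= delta_B, using that every
   (n-1)-set of A is independent; comparing it with A^geo <= Bh gives A <= B.  Closures of
   (n-1)-sets in G(A) have delta_A at most n-1, so every maximal clique of Bh has dimension
   n-1 in G(B); since Bh is geometric, the closure in G(B) of an (n-1)-set is then the
   maximal clique of Bh containing it, i.e. G(B)^geo = Bh. *)

Section CliqueStructures.
Variables (n : nat) (T : finType).
Hypothesis n_gt0 : (0 < n)%N.
Implicit Types (S : structure T) (X Y K L M Q e C D E W Z : {set T}).

Definition scard X : nat := (#|X| - n.-1)%N.

Lemma starcardE X : starcard n X = (scard X)%:Z.
Proof. rewrite /starcard /scard; lia. Qed.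

Lemma Posz_sum (I : finType) (P : pred I) (F : I -> nat) :
  (\sum_(i | P i) F i)%N%:Z = \sum_(i | P i) (F i)%:Z.
Proof. by rewrite (big_morph Posz PoszD (erefl 0%:Z)). Qed.

Lemma deltaE S :
  delta n S = #|carrier S|%:Z - (\sum_(K in mcliques n S) scard K)%N%:Z.
Proof. by rewrite /delta Posz_sum; congr (_ - _); apply: eq_bigr => K _; rewrite starcardE. Qed.

Lemma leq_scard X Y : X \subset Y -> (scard X <= scard Y)%N.
Proof. by move=> /subset_leq_card h; rewrite /scard leq_sub2r. Qed.

Lemma scard_small X : (#|X| < n)%N -> scard X = 0%N.
Proof. rewrite /scard; lia. Qed.

Lemma exists_card_between k D Z : D \subset Z -> (#|D| <= k <= #|Z|)%N ->
  exists E, [/\ D \subset E, E \subset Z & #|E| = k].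
Proof.
move=> DZ /andP[Dk kZ].
have [m km] : exists m, k = (#|D| + m)%N by exists (k - #|D|)%N; lia.
subst k; clear Dk.
elim: m D DZ kZ => [|m IH] D DZ hc; first by exists D; rewrite addn0.
have : (0 < #|Z :\: D|)%N by rewrite cardsD (setIidPr DZ); move: hc; clear; lia.
rewrite card_gt0 => /set0Pn[x]; rewrite inE => /andP[xD xZ].
have DZ' : x |: D \subset Z by rewrite subUset sub1set xZ.
have cx : #|x |: D| = (#|D|).+1 by rewrite cardsU1 xD.
have [E [h1 h2 h3]] := IH _ DZ' ltac:(rewrite cx; lia).
by exists E; split => //; [apply: subset_trans h1; apply: subsetUr | rewrite h3 cx; lia].
Qed.

Lemma cliqueP S K : reflect [/\ K \subset carrier S, (n <= #|K|)%N &
   forall e, e \subset K -> #|e| = n -> e \in rel S] (clique n S K).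
Proof.
apply: (iffP and3P) => [[h1 h2 /forallP h3]|[h1 h2 h3]]; split => //.
  by move=> e eK ce; have := h3 e; rewrite eK ce eqxx => /implyP; apply.
by apply/forallP => e; apply/implyP => /andP[eK /eqP ce]; exact: h3.
Qed.

Lemma maxcliqueP S K : reflect (clique n S K /\
   forall K', clique n S K' -> K \subset K' -> K' = K) (maxclique n S K).
Proof.
apply: (iffP andP) => [[cK /forallP h]|[cK h]]; split => //.
  move=> K' cK' KK'; have := h K'; rewrite cK' /= properE KK' /= negbK => sub.
  by apply/eqP; rewrite eqEsubset sub.
apply/forallP => K'; apply/implyP => cK'; apply/negP => /properP[KK' [x xK' xK]].
by move: xK; rewrite -(h K' cK' KK') xK'.
Qed.

Lemma cliqueS S K Q : clique n S K -> Q \subset K -> (n <= #|Q|)%N -> clique n S Q.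
Proof.
move=> /cliqueP[h1 h2 h3] QK nQ; apply/cliqueP; split => //.
  exact: subset_trans QK h1.
by move=> e eQ; apply: h3; apply: subset_trans eQ QK.
Qed.

Lemma clique_rel S K e : clique n S K -> e \subset K -> #|e| = n -> e \in rel S.
Proof. by move=> /cliqueP[_ _ h]; apply: h. Qed.

Lemma wf_rel S e : wf n S -> e \in rel S -> #|e| = n /\ e \subset carrier S.
Proof. by move=> /forallP /(_ e) /implyP h /h /andP[/eqP]. Qed.

Lemma rel_clique S e : wf n S -> e \in rel S -> clique n S e.
Proof.
move=> wS eS; have [ce eC] := wf_rel wS eS.
apply/cliqueP; split; rewrite ?ce // => e' e'e ce'.
suff -> : e' = e by [].
by apply/eqP; rewrite eqEcard e'e ce ce' leqnn.
Qed.

Lemma clique_mclique S K : clique n S K -> exists2 M, M \in mcliques n S & K \subset M.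
Proof.
move=> cK; have PK : clique n S K && (K \subset K) by rewrite cK subxx.
case: (@arg_maxnP _ K (fun M => clique n S M && (K \subset M)) (fun M => #|M|) PK).
move=> M /andP[cM KM] Mmax; exists M => //; rewrite inE.
apply/maxcliqueP; split => // K' cK' MK'.
apply/eqP; rewrite eq_sym eqEcard MK' /=.
by apply: Mmax; rewrite cK' (subset_trans KM MK').
Qed.

Lemma mcliques_maxclique S M : M \in mcliques n S -> maxclique n S M.
Proof. by rewrite inE. Qed.

Lemma mcliques_clique S M : M \in mcliques n S -> clique n S M.
Proof. by rewrite inE => /andP[]. Qed.

Lemma mcliques_sub S M : M \in mcliques n S -> M \subset carrier S.
Proof. by move=> /mcliques_clique /cliqueP[]. Qed.

Lemma mcliques_card S M : M \in mcliques n S -> (n <= #|M|)%N.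
Proof. by move=> /mcliques_clique /cliqueP[]. Qed.

Definition mcliques_sep S := forall M1 M2, M1 \in mcliques n S -> M2 \in mcliques n S ->
  (n <= #|M1 :&: M2|)%N -> M1 = M2.

Lemma Cclq0P S : reflect (wf n S /\ mcliques_sep S) (Cclq0 n S).
Proof.
apply: (iffP andP) => [[wS /forall_inP h]|[wS sepS]]; split => //.
  move=> M1 M2 m1 m2 nM; apply/eqP; apply: contraTT nM => neq.
  by rewrite -ltnNge; move/forall_inP: (h M1 m1) => /(_ M2 m2) /implyP; apply.
apply/forall_inP => M1 m1; apply/forall_inP => M2 m2; apply/implyP => neq.
by rewrite ltnNge; apply: contra neq => /(sepS _ _ m1 m2) ->.
Qed.

Lemma strongP S' S : reflect (substructure S' S /\ forall X, carrier S' \subset X ->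
    X \subset carrier S -> delta n S' <= delta n (induced S X)) (strong n S' S).
Proof.
apply: (iffP andP) => [[sub /forallP h]|[sub h]]; split => //.
  by move=> X S'X XS; have := h X; rewrite S'X XS subr_ge0 => /implyP; apply.
by apply/forallP => X; apply/implyP => /andP[S'X XS]; rewrite subr_ge0 h.
Qed.

Lemma clique_induced S X Q : X \subset carrier S ->
  clique n (induced S X) Q = (Q \subset X) && clique n S Q.
Proof.
move=> XS; apply/cliqueP/andP => [[h1 h2 h3]|[h1 /cliqueP[_ h2 h3]]]; split => //.
  apply/cliqueP; split => //; first exact: subset_trans h1 XS.
  by move=> e eQ ce; have := h3 e eQ ce; rewrite inE => /andP[].
by move=> e eQ ce; rewrite inE h3 //= (subset_trans eQ h1).
Qed.

Lemma mcliques_induced S X : mcliques_sep S -> X \subset carrier S ->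
  mcliques n (induced S X) =
  [set M :&: X | M in [set M in mcliques n S | (n <= #|M :&: X|)%N]].
Proof.
move=> sepS XS; apply/setP => Q; rewrite inE; apply/idP/imsetP.
  move=> /maxcliqueP[]; rewrite clique_induced // => /andP[QX cQ] Qmax.
  have [M mM QM] := clique_mclique cQ.
  have QMX : Q \subset M :&: X by rewrite subsetI QM QX.
  have nMX : (n <= #|M :&: X|)%N.
    by case/cliqueP: cQ => _ nQ _; rewrite (leq_trans nQ (subset_leq_card QMX)).
  exists M; first by rewrite inE mM.
  apply/esym; apply: Qmax => //; rewrite clique_induced // subsetIr /=.
  exact: cliqueS (mcliques_clique mM) (subsetIl _ _) nMX.
move=> [M]; rewrite inE => /andP[mM nMX] ->.
apply/maxcliqueP; split.
  by rewrite clique_induced // subsetIr (cliqueS (mcliques_clique mM) (subsetIl _ _)).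
move=> Q'; rewrite clique_induced // => /andP[Q'X cQ'] MXQ'.
have [M' mM' Q'M'] := clique_mclique cQ'.
have eM : M' = M.
  apply: sepS => //; apply: leq_trans nMX _; apply: subset_leq_card.
  by rewrite subsetI (subset_trans MXQ' Q'M') subsetIl.
by apply/eqP; rewrite eqEsubset MXQ' andbT subsetI Q'X andbT -eM.
Qed.

Lemma delta_induced S X : mcliques_sep S -> X \subset carrier S ->
  delta n (induced S X) = #|X|%:Z - (\sum_(M in mcliques n S) scard (M :&: X))%N%:Z.
Proof.
move=> sepS XS; rewrite deltaE mcliques_induced // big_imset /=; last first.
  move=> M1 M2; rewrite !inE => /andP[m1 n1] /andP[m2 n2] e12.
  apply: sepS; rewrite ?inE //; apply: leq_trans n1 _; apply: subset_leq_card.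
  by rewrite subsetI subsetIl /= e12 subsetIl.
congr (_ - (_)%:Z); apply/esym.
rewrite (bigID (fun M => n <= #|M :&: X|)%N) /= [X in (_ + X)%N]big1 ?addn0.
  by apply: eq_bigl => M; rewrite !inE.
by move=> M /andP[_]; rewrite -ltnNge => /scard_small.
Qed.

Lemma delta_le_card S : delta n S <= #|carrier S|%:Z.
Proof. by rewrite deltaE; lia. Qed.

Lemma delta_small S X : (#|X| < n)%N -> delta n (induced S X) = #|X|%:Z.
Proof.
move=> hX; rewrite deltaE /= big1 ?subr0 // => Q.
rewrite inE => /andP[/and3P[QX nQ _] _].
by move: (subset_leq_card QX) => /=; lia.
Qed.

Lemma delta_clique_le S Q : clique n S Q -> delta n (induced S Q) <= (n.-1)%:Z.
Proof.
move=> cQ; have [QS nQ _] := cliqueP _ _ cQ.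
have mQ : Q \in mcliques n (induced S Q).
  rewrite inE; apply/maxcliqueP; split; first by rewrite clique_induced // subxx.
  move=> K'; rewrite clique_induced // => /andP[K'Q _] QK'.
  by apply/eqP; rewrite eqEsubset K'Q QK'.
rewrite deltaE /= (bigD1 Q) //= /scard; lia.
Qed.

Lemma delta_submod S X Y : mcliques_sep S -> X \subset carrier S -> Y \subset carrier S ->
  delta n (induced S (X :|: Y)) + delta n (induced S (X :&: Y)) <=
  delta n (induced S X) + delta n (induced S Y).
Proof.
move=> sepS XS YS.
have XYS : X :|: Y \subset carrier S by rewrite subUset XS YS.
have IS : X :&: Y \subset carrier S by rewrite (subset_trans (subsetIl _ _)).
rewrite !delta_induced //.
suff : (\sum_(M in mcliques n S) scard (M :&: X) + \sum_(M in mcliques n S) scard (M :&: Y) <=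
   \sum_(M in mcliques n S) scard (M :&: (X :|: Y)) +
   \sum_(M in mcliques n S) scard (M :&: (X :&: Y)))%N by have := cardsUI X Y; lia.
rewrite -!big_split /=; apply: leq_sum => M _.
have := cardsUI (M :&: X) (M :&: Y); rewrite -setIUr -setIIr.
have : (#|M :&: (X :&: Y)| <= #|M :&: X|)%N.
  by apply: subset_leq_card; rewrite setIS // subsetIl.
have : (#|M :&: (X :&: Y)| <= #|M :&: Y|)%N.
  by apply: subset_leq_card; rewrite setIS // subsetIr.
rewrite /scard; lia.
Qed.

Lemma dim_le_delta S X Y : Y \subset carrier S -> X \subset Y ->
  dim n S X <= delta n (induced S Y).
Proof. by move=> YS XY; apply: bigmin_le_cond; rewrite powersetE YS. Qed.

Lemma dim_le_delta_self S X : dim n S X <= delta n (induced S X).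
Proof. exact: bigmin_le_id. Qed.

Lemma dim_ge S X c : c <= delta n (induced S X) ->
  (forall Y, Y \subset carrier S -> X \subset Y -> c <= delta n (induced S Y)) ->
  c <= dim n S X.
Proof. by move=> h0 h; apply: le_bigmin => // Y /andP[]; rewrite powersetE; exact: h. Qed.

Lemma dim_witness S X : X \subset carrier S -> exists Y,
  [/\ X \subset Y, Y \subset carrier S & dim n S X = delta n (induced S Y)].
Proof.
move=> XS; rewrite /dim; elim/big_rec: _ => [|Y v /andP[]]; first by exists X.
rewrite powersetE => YS XY [Z [XZ ZS ->]].
by case: (leP (delta n (induced S Y)) (delta n (induced S Z))) => _; [exists Y | exists Z].
Qed.

Lemma dimS S X Y : X \subset Y -> Y \subset carrier S -> dim n S X <= dim n S Y.
Proof.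
move=> XY YS; apply: dim_ge; first exact: dim_le_delta.
by move=> Z ZS YZ; apply: dim_le_delta => //; exact: subset_trans XY YZ.
Qed.

Lemma sum_scard_mclique S K Y : mcliques_sep S -> K \in mcliques n S -> Y \subset K ->
  (\sum_(M in mcliques n S) scard (M :&: Y))%N = scard Y.
Proof.
move=> sepS mK YK; rewrite (bigD1 K) //= big1 ?addn0; first by rewrite (setIidPr YK).
move=> M /andP[mM MK]; apply: scard_small; rewrite ltnNge; apply/negP => h.
move/eqP: MK; apply; apply: sepS => //; apply: leq_trans h _; apply: subset_leq_card.
by rewrite setIS.
Qed.

Lemma leq_sum_single (I : finType) (P : pred I) (F : I -> nat) j :
  (forall i, P i -> (0 < F i)%N -> i = j) -> (\sum_(i | P i) F i <= F j)%N.
Proof.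
move=> H; have F0 i : P i -> i != j -> F i = 0%N.
  by move=> Pi; apply: contraNeq; rewrite -lt0n => /(H i Pi) ->.
case Pj: (P j); last by rewrite big1 // => i Pi; apply: F0 => //; apply: contraFneq Pj => <-.
by rewrite (bigD1 j) //= big1 ?addn0 // => i /andP[]; apply: F0.
Qed.

Section Loops.
Hypothesis n1 : n = 1%N.

Lemma mclique_unique1 S M1 M2 : M1 \in mcliques n S -> M2 \in mcliques n S -> M1 = M2.
Proof.
move=> m1 m2; have [s1 c1 _] := cliqueP _ _ (mcliques_clique m1).
have [s2 c2 _] := cliqueP _ _ (mcliques_clique m2).
have c12 : clique n S (M1 :|: M2).
  apply/cliqueP; split; first by rewrite subUset s1 s2.
    by apply: leq_trans c1 _; apply: subset_leq_card; apply: subsetUl.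
  move=> e eM ce; move: (ce); rewrite n1 => /eqP/cards1P[x ex].
  have : x \in M1 :|: M2 by apply: (subsetP eM); rewrite ex set11.
  by rewrite inE ex => /orP[] xM; [apply: (clique_rel (mcliques_clique m1)) |
    apply: (clique_rel (mcliques_clique m2))]; rewrite ?sub1set -?ex.
have [_ h1] := maxcliqueP _ _ (mcliques_maxclique m1).
have [_ h2] := maxcliqueP _ _ (mcliques_maxclique m2).
by rewrite -(h1 _ c12 (subsetUl _ _)) (h2 _ c12 (subsetUr _ _)).
Qed.

Lemma sum_scard1 S Y : wf n S ->
  (\sum_(M in mcliques n S) scard (M :&: Y))%N = #|[set x | [set x] \in rel S] :&: Y|.
Proof.
move=> wS; have loopP x : [set x] \in rel S -> exists2 M, M \in mcliques n S & x \in M.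
  move=> xS; have [M mM xM] := clique_mclique (rel_clique wS xS).
  by exists M; rewrite // -sub1set.
case: (set_0Vmem (mcliques n S)) => [e0|[M0 m0]].
  rewrite e0 big_set0; apply/esym/eqP; rewrite cards_eq0; apply/eqP/setP => x.
  rewrite !inE; case xS: ([set x] \in rel S) => //.
  by have [M] := loopP x xS; rewrite e0 inE.
have -> : mcliques n S = [set M0].
  by apply/setP => M; rewrite in_set1; apply/idP/eqP => [mM|->] //; exact: mclique_unique1 mM m0.
rewrite big_set1 /scard n1 subn0; congr #|_ :&: _|; apply/setP => x; rewrite inE.
apply/idP/idP => [xM|/loopP[M mM]].
  by apply: (clique_rel (mcliques_clique m0)); rewrite ?sub1set ?cards1.
by rewrite (mclique_unique1 mM m0).
Qed.

End Loops.


Section Amalgamation.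
Variables (A Bh Ag : structure T).
Hypothesis CclqA : Cclq n A.
Hypothesis pureA : pure n A (n%:Z - 1).
Hypothesis CgeoBh : Cgeo n Bh.
Hypothesis geoA : geo_of n A Ag.
Hypothesis Ag_Bh : strong n Ag Bh.

Local Notation A0 := (carrier A).
Local Notation Bc := (carrier Bh).

Lemma wfA : wf n A.
Proof. by case/andP: CclqA => /Cclq0P[]. Qed.

Lemma sepA : mcliques_sep A.
Proof. by case/andP: CclqA => /Cclq0P[]. Qed.

Lemma wfBh : wf n Bh.
Proof. by case/andP: CgeoBh. Qed.

Lemma geometricP X : X \subset Bc -> (n <= #|X|)%N -> delta n (induced Bh X) < n%:Z ->
  exists K, [/\ K \in mcliques n Bh, X \subset K &
    forall K', K' \in mcliques n Bh -> X \subset K' -> K' = K].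
Proof.
move=> XB nX dX; case/andP: CgeoBh => _ /forallP /(_ X) /implyP.
rewrite XB nX dX => /(_ isT) /cards1P[K eK].
have : K \in [set K in mcliques n Bh | X \subset K] by rewrite eK set11.
rewrite inE => /andP[mK XK]; exists K; split => // K' mK' XK'.
by apply/set1P; rewrite -eK inE mK' XK'.
Qed.

Lemma geometric_mclique X : X \subset Bc -> (n <= #|X|)%N ->
  delta n (induced Bh X) < n%:Z -> exists2 K, K \in mcliques n Bh & X \subset K.
Proof. by move=> XB nX dX; have [K [mK XK _]] := geometricP XB nX dX; exists K. Qed.

Lemma sepBh : mcliques_sep Bh.
Proof.
move=> M1 M2 m1 m2 nM.
have [e [_ eM ce]] :=
  exists_card_between (sub0set (M1 :&: M2)) ltac:(rewrite cards0 /=; exact: nM).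
have eM1 : e \subset M1 by apply: subset_trans eM (subsetIl _ _).
have eM2 : e \subset M2 by apply: subset_trans eM (subsetIr _ _).
have ce' : (n <= #|e|)%N by rewrite ce.
have ceq : clique n Bh e := cliqueS (mcliques_clique m1) eM1 ce'.
have eB : e \subset Bc by apply: subset_trans eM1 (mcliques_sub m1).
have [K [_ _ Kuniq]] := geometricP eB ce' ltac:(have := delta_clique_le ceq; lia).
by rewrite (Kuniq _ m1 eM1) (Kuniq _ m2 eM2).
Qed.

(* A set with delta < n lies in a maximal clique of Bh, where its delta is n-1. *)
Lemma delta_Bh_ge Y : Y \subset Bc -> (minn #|Y| n.-1)%:Z <= delta n (induced Bh Y).
Proof.
move=> YB; case: (ltnP #|Y| n) => hY; first by rewrite delta_small //; lia.
case: (ltP (delta n (induced Bh Y)) n%:Z) => hd; last by lia.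
have [K mK YK] := geometric_mclique YB hY hd.
by rewrite delta_induced ?(sum_scard_mclique sepBh mK YK) /scard //; [lia | exact: sepBh].
Qed.

Lemma mcliques_Bh_eq K1 K2 : K1 \in mcliques n Bh -> K2 \in mcliques n Bh ->
  (n.-1 <= #|K1 :&: K2|)%N -> K1 = K2.
Proof.
move=> m1 m2 h; case: (eqVneq K1 K2) => // neq; exfalso.
have UB : K1 :|: K2 \subset Bc by rewrite subUset !mcliques_sub.
have hU : (n <= #|K1 :|: K2|)%N.
  by apply: leq_trans (mcliques_card m1) _; apply: subset_leq_card; apply: subsetUl.
have hs : (scard K1 + scard K2 <= \sum_(M in mcliques n Bh) scard (M :&: (K1 :|: K2)))%N.
  rewrite (bigD1 K1) //= (bigD1 K2) /=; last by rewrite m2 eq_sym neq.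
  by rewrite (setIidPl (subsetUl _ _)) (setIidPl (subsetUr _ _)) addnA leq_addr.
have hd : delta n (induced Bh (K1 :|: K2)) < n%:Z.
  rewrite delta_induced //; last exact: sepBh.
  have := cardsUI K1 K2; have := mcliques_card m1; have := mcliques_card m2.
  move: hs; rewrite /scard; lia.
have [K [mK UK _]] := geometricP UB hU hd.
have [_ h1] := maxcliqueP _ _ (mcliques_maxclique m1).
have [_ h2] := maxcliqueP _ _ (mcliques_maxclique m2).
have cK := mcliques_clique mK.
move: neq; rewrite -(h1 _ cK (subset_trans (subsetUl _ _) UK)).
by rewrite (h2 _ cK (subset_trans (subsetUr _ _) UK)) eqxx.
Qed.

Lemma carrier_Ag : carrier Ag = A0.
Proof. by case: geoA. Qed.

Lemma mcliques_Ag : mcliques n Ag = [set cl n A C | C in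
        [set C in powerset A0 | (#|C|%:Z == n%:Z - 1) && (cl n A C != C)]].
Proof. by case: geoA. Qed.

Lemma sub_A_Bh : A0 \subset Bc.
Proof. by case/strongP: Ag_Bh => /andP[]; rewrite carrier_Ag. Qed.

Lemma rel_Ag : rel Ag = [set e in rel Bh | e \subset A0].
Proof. by case/strongP: Ag_Bh => /andP[_ /eqP]; rewrite carrier_Ag. Qed.

Lemma delta_Ag_le X : A0 \subset X -> X \subset Bc -> delta n Ag <= delta n (induced Bh X).
Proof. by case/strongP: Ag_Bh => _; rewrite carrier_Ag; apply. Qed.

Lemma indepA X : X \subset A0 -> #|X| = n.-1 -> dim n A X = (n.-1)%:Z.
Proof.
move=> XA cX; case: pureA => _ [h _].
by have := h X XA ltac:(lia); rewrite /indep => /eqP ->; rewrite cX.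
Qed.

Lemma depA : exists X, [/\ X \subset A0, #|X| = n & dim n A X != n%:Z].
Proof.
case: pureA => _ [_ [X [XA cX nX]]]; exists X; split => //; first lia.
by move: nX; rewrite /indep; have -> : #|X|%:Z = n%:Z by lia.
Qed.

Lemma delta_A_ge Z : Z \subset A0 -> (minn #|Z| n.-1)%:Z <= delta n (induced A Z).
Proof.
move=> ZA; case: (leqP n.-1 #|Z|) => hZ; last by rewrite delta_small; lia.
have [C [_ CZ cC]] := exists_card_between (sub0set Z) ltac:(rewrite cards0 /=; exact: hZ).
have := dim_le_delta ZA CZ; rewrite indepA ?(subset_trans CZ ZA) //; lia.
Qed.

(* Purity: the closure in G(A) of the (n-1)-set e \ x is a maximal clique of A^geo containing e. *)
Lemma relA_Bh e : e \in rel A -> e \in rel Bh.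
Proof.
move=> eA; have [ce eA0] := wf_rel wfA eA.
have : (0 < #|e|)%N by rewrite ce.
rewrite card_gt0 => /set0Pn[x xe]; set C := e :\ x.
have CA : C \subset A0 by apply: subset_trans (subD1set _ _) eA0.
have cC : #|C| = n.-1 by rewrite /C; move: ce; rewrite (cardsD1 x e) xe /=; lia.
have dC := indepA CA cC.
have de : dim n A e = (n.-1)%:Z.
  apply/eqP; rewrite eq_le; apply/andP; split.
    exact: le_trans (dim_le_delta_self _ _) (delta_clique_le (rel_clique wfA eA)).
  by rewrite -dC; apply: dimS => //; apply: subD1set.
have e_cl : e \subset cl n A C.
  apply/subsetP => a ae; rewrite inE (subsetP eA0 a ae) /=.
  case: (eqVneq a x) => [->|nax]; first by rewrite setUC setD1K // de dC.
  by have -> : C :|: [set a] = C by apply/setUidPl; rewrite sub1set /C !inE nax.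
have ncl : cl n A C != C.
  by apply: contraTneq (subsetP e_cl x xe) => ->; rewrite /C setD11.
have mcl : cl n A C \in mcliques n Ag.
  rewrite mcliques_Ag; apply/imsetP; exists C => //.
  by rewrite !inE CA ncl andbT cC; apply/eqP; lia.
have : e \in rel Ag by apply: (clique_rel (mcliques_clique mcl)).
by rewrite rel_Ag inE => /andP[].
Qed.

Lemma cliqueA_Bh Q : clique n A Q -> clique n Bh Q.
Proof.
move=> /cliqueP[QA nQ h]; apply/cliqueP; split => //; first exact: subset_trans QA sub_A_Bh.
by move=> e eQ ce; apply: relA_Bh; apply: h.
Qed.

Lemma cliqueAg_Bh L : clique n Ag L -> clique n Bh L.
Proof.
move=> /cliqueP[LA nL h]; rewrite carrier_Ag in LA; apply/cliqueP; split => //.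
  exact: subset_trans LA sub_A_Bh.
by move=> e eL ce; have := h e eL ce; rewrite rel_Ag inE => /andP[].
Qed.

Lemma cliqueAg_meetA K : K \in mcliques n Bh -> (n <= #|K :&: A0|)%N ->
  clique n Ag (K :&: A0).
Proof.
move=> mK h; apply/cliqueP; split => //; first by rewrite carrier_Ag subsetIr.
move=> e eK ce; rewrite rel_Ag inE (subset_trans eK (subsetIr _ _)) andbT.
exact: (clique_rel (mcliques_clique mK) (subset_trans eK (subsetIl _ _)) ce).
Qed.

(* The regrouping works since a set of n-1 points of a maximal clique of Bh lies in no other one. *)
Lemma sum_by_mcliques_Bh (D : {set {set T}}) (F : {set T} -> nat) :
  (forall M, M \in D -> (n.-1 <= #|M|)%N /\ exists2 K, K \in mcliques n Bh & M \subset K) ->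
  (\sum_(M in D) F M =
   \sum_(K in mcliques n Bh) \sum_(M in D) (if M \subset K then F M else 0))%N.
Proof.
move=> H; rewrite exchange_big /=; apply: eq_bigr => M mD.
have [cM [K0 m0 MK0]] := H M mD.
rewrite (bigD1 K0) //= MK0 big1 ?addn0 // => K /andP[mK nK].
case: ifP => // MK; suff eK : K = K0 by rewrite eK eqxx in nK.
apply: mcliques_Bh_eq => //.
by apply: leq_trans cM _; apply: subset_leq_card; rewrite subsetI MK MK0.
Qed.

Definition core K := odflt set0
  [pick C : {set T} | (C \subset K :&: A0) && (#|C| == minn n.-1 #|K :&: A0|)].

Lemma coreP K : core K \subset K :&: A0 /\ #|core K| = minn n.-1 #|K :&: A0|.
Proof.
rewrite /core; case: pickP => [C /andP[h1 /eqP h2]|h] //=.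
have [E [_ h1 h2]] := @exists_card_between (minn n.-1 #|K :&: A0|) set0 (K :&: A0)
   (sub0set _) ltac:(by rewrite cards0 geq_minr).
by move: (h E); rewrite h1 h2 eqxx.
Qed.

Definition trim K := (K :\: A0) :|: core K.

Lemma trim_sub K : trim K \subset K.
Proof.
rewrite /trim subUset subsetDl /=; have [h _] := coreP K.
exact: subset_trans h (subsetIl _ _).
Qed.

Lemma trimIA K : trim K :&: A0 = core K.
Proof.
have [h _] := coreP K; apply/setP => x; rewrite /trim !inE.
case xC: (x \in core K); first by have := subsetP h x xC; rewrite !inE => /andP[_ ->]; rewrite orbT.
by rewrite orbF; case: (x \in A0); rewrite ?andbF.
Qed.

Lemma card_trimIA K : (#|trim K :&: A0| <= n.-1)%N.
Proof. by rewrite trimIA; have [_ ->] := coreP K; apply: geq_minl. Qed.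

Lemma card_trimI K Y : (#|trim K :&: Y| <= #|(K :\: A0) :&: Y| + n.-1)%N.
Proof.
rewrite /trim setIUl cardsU; have [_ c] := coreP K.
have : (#|core K :&: Y| <= #|core K|)%N by apply: subset_leq_card; apply: subsetIl.
rewrite c; lia.
Qed.

Lemma card_trim K : #|trim K| = (#|K :\: A0| + minn n.-1 #|K :&: A0|)%N.
Proof.
have [h c] := coreP K; rewrite /trim cardsU -c.
suff -> : (K :\: A0) :&: core K = set0 by rewrite cards0 subn0.
apply/setP => x; rewrite !inE; apply/negbTE/negP => /andP[/andP[xA _] xC].
by have := subsetP h x xC; rewrite !inE (negbTE xA) andbF.
Qed.

Lemma cardI_splitA K Y : #|K :&: Y| = (#|K :&: Y :&: A0| + #|(K :\: A0) :&: Y|)%N.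
Proof.
rewrite -(cardsID A0 (K :&: Y)); congr (_ + _)%N; apply: eq_card => x.
by rewrite !inE; do !case: (_ \in _).
Qed.

Lemma trim_notA K : (n <= #|trim K|)%N -> ~~ (trim K \subset A0).
Proof. by move=> nK; apply/negP => /setIidPl h; have := card_trimIA K; rewrite h; lia. Qed.

Definition relB := rel A :|:
  \bigcup_(K in mcliques n Bh) [set e in powerset (trim K) | #|e| == n].

Local Notation B := (Struc Bc relB).

Lemma relBP e : reflect (e \in rel A \/
   exists2 K, K \in mcliques n Bh & (e \subset trim K) && (#|e| == n)) (e \in relB).
Proof.
rewrite /relB in_setU; apply: (iffP orP) => [[h|/bigcupP[K mK]]|[h|[K mK h]]].
- by left.
- by rewrite !inE => h; right; exists K.
- by left.
- by right; apply/bigcupP; exists K => //; rewrite !inE.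
Qed.

Lemma relB_A : [set e in relB | e \subset A0] = rel A.
Proof.
apply/setP => e; rewrite inE; apply/andP/idP => [[/relBP[//|[K mK /andP[eK /eqP ce]]] eA]|eA].
  have : (#|e| <= #|trim K :&: A0|)%N by apply: subset_leq_card; rewrite subsetI eK eA.
  by have := card_trimIA K; lia.
by split; [apply/relBP; left | exact: (wf_rel wfA eA).2].
Qed.

Lemma relB_Bh e : e \in relB -> e \in rel Bh.
Proof.
case/relBP => [|[K mK /andP[eK /eqP ce]]]; first exact: relA_Bh.
exact: (clique_rel (mcliques_clique mK) (subset_trans eK (trim_sub K)) ce).
Qed.

Lemma wfB : wf n B.
Proof.
apply/forallP => e; apply/implyP => /relBP [eA|[K mK /andP[eK ce]]] /=.
  by have [-> h] := wf_rel wfA eA; rewrite eqxx (subset_trans h sub_A_Bh).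
by rewrite ce (subset_trans eK (subset_trans (trim_sub K) (mcliques_sub mK))).
Qed.

Lemma inducedB_A Y : Y \subset A0 -> induced B Y = induced A Y.
Proof.
move=> YA; rewrite /induced; congr Struc; apply/setP => e.
move/setP/(_ e): relB_A; rewrite !inE /=.
by case eY: (e \subset Y); rewrite ?andbF ?andbT // (subset_trans eY YA) andbT.
Qed.

Lemma cliqueA_B Q : clique n A Q -> clique n B Q.
Proof.
move=> /cliqueP[QA nQ h]; apply/cliqueP; split => //=; first exact: subset_trans QA sub_A_Bh.
by move=> e eQ ce; apply/relBP; left; apply: h.
Qed.

Lemma clique_trimB K : K \in mcliques n Bh -> (n <= #|trim K|)%N -> clique n B (trim K).
Proof.
move=> mK nK; apply/cliqueP; split => //=.
  exact: subset_trans (trim_sub K) (mcliques_sub mK).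
by move=> e eK ce; apply/relBP; right; exists K; rewrite // eK ce eqxx.
Qed.

Lemma cliqueB_A Q : clique n B Q -> Q \subset A0 -> clique n A Q.
Proof.
move=> /cliqueP[_ nQ h] QA; apply/cliqueP; split => // e eQ ce.
by rewrite -relB_A inE h // (subset_trans eQ QA).
Qed.

Lemma cliqueB_Bh Q : clique n B Q -> clique n Bh Q.
Proof.
move=> /cliqueP[QB nQ h]; apply/cliqueP; split => // e eQ ce.
by apply: relB_Bh; apply: h.
Qed.

(* Each x in Q shares an edge with a point p of Q outside A; for n >= 2 that edge comes from
   a trimmed clique, which must be trim K. *)
Lemma cliqueB_sub_trim Q : (1 < n)%N -> clique n B Q -> ~~ (Q \subset A0) ->
  exists2 K, K \in mcliques n Bh & Q \subset trim K.
Proof.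
move=> n2 cB nQA; have [K mK QK] := clique_mclique (cliqueB_Bh cB).
have [p pQ pA] := subsetPn nQA; have nQ : (n <= #|Q|)%N by case/cliqueP: cB.
exists K => //; apply/subsetP => x xQ.
have [e [pxe eQ ce]] := @exists_card_between n [set p; x] Q
   ltac:(by rewrite subUset !sub1set pQ xQ)
   ltac:(by rewrite cards2 nQ andbT; case: (p != x) => //; apply: ltnW n2).
have pe : p \in e by apply: (subsetP pxe); apply: set21.
have xe : x \in e by apply: (subsetP pxe); apply: set22.
case/relBP: (clique_rel cB eQ ce) => [eA | [J mJ /andP[eJ _]]].
  by have [_ /subsetP /(_ p pe)] := wf_rel wfA eA; rewrite (negbTE pA).
suff eJK : J = K by rewrite -eJK; apply: (subsetP eJ).
apply: mcliques_Bh_eq => //; apply: leq_trans (leq_pred n) _; rewrite -ce.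
by apply: subset_leq_card; rewrite subsetI (subset_trans eJ (trim_sub J)) (subset_trans eQ QK).
Qed.

Definition trims := [set trim K | K in [set K in mcliques n Bh | (n <= #|trim K|)%N]].

Section TwoOrMore.
Hypothesis n_gt1 : (1 < n)%N.

Lemma mcliquesB_sub : mcliques n B \subset mcliques n A :|: trims.
Proof.
apply/subsetP => M mM; have /maxcliqueP[cM Mmax] := mcliques_maxclique mM.
rewrite in_setU; case: (boolP (M \subset A0)) => MA.
  rewrite inE; apply/orP; left; apply/maxcliqueP; split; first exact: cliqueB_A.
  by move=> M' cM' MM'; apply: Mmax => //; apply: cliqueA_B.
have [K mK MK] := cliqueB_sub_trim n_gt1 cM MA.
have nK : (n <= #|trim K|)%N.
  by case/cliqueP: cM => _ nM _; apply: leq_trans nM (subset_leq_card MK).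
apply/orP; right; apply/imsetP; exists K; first by rewrite inE mK.
by apply/esym; apply: Mmax => //; apply: clique_trimB.
Qed.

Lemma mcliquesA_B M : M \in mcliques n A -> M \in mcliques n B.
Proof.
move=> mA; have /maxcliqueP[cM Mmax] := mcliques_maxclique mA.
have MA := mcliques_sub mA.
rewrite inE; apply/maxcliqueP; split; first exact: cliqueA_B.
move=> M' cM' MM'; case: (boolP (M' \subset A0)) => M'A.
  by apply: Mmax => //; apply: cliqueB_A.
have [K mK MK] := cliqueB_sub_trim n_gt1 cM' M'A.
have : (#|M| <= #|trim K :&: A0|)%N.
  by apply: subset_leq_card; rewrite subsetI MA (subset_trans MM' MK).
by have := card_trimIA K; have := mcliques_card mA; lia.
Qed.

Lemma trims_mcliquesB M : M \in trims -> M \in mcliques n B.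
Proof.
case/imsetP=> K; rewrite inE => /andP[mK nK] ->.
rewrite inE; apply/maxcliqueP; split; first exact: clique_trimB.
move=> M' cM' KM'.
have M'A : ~~ (M' \subset A0).
  by apply: contra (trim_notA nK) => h; apply: subset_trans KM' h.
have [J mJ MJ] := cliqueB_sub_trim n_gt1 cM' M'A.
have eJ : J = K.
  apply: mcliques_Bh_eq => //; apply: leq_trans (leq_pred _) (leq_trans nK _).
  apply: subset_leq_card; rewrite subsetI trim_sub.
  by rewrite (subset_trans KM' (subset_trans MJ (trim_sub J))).
by apply/eqP; rewrite eqEsubset KM' andbT -eJ.
Qed.

Lemma mcliquesB : mcliques n B = mcliques n A :|: trims.
Proof.
apply/eqP; rewrite eqEsubset mcliquesB_sub /=.
by apply/subsetP => M; rewrite in_setU => /orP[/mcliquesA_B|/trims_mcliquesB].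
Qed.

End TwoOrMore.

Lemma sepB : mcliques_sep B.
Proof.
move=> M1 M2 m1 m2 nM.
have [n1|n2] : n = 1%N \/ (1 < n)%N by lia.
  exact: (mclique_unique1 n1 m1 m2).
have meetA_small M K : M \subset A0 -> (#|M :&: trim K| <= n.-1)%N.
  move=> MA; apply: leq_trans (card_trimIA K); apply: subset_leq_card.
  by rewrite setIC setIS.
move: m1 m2 nM; rewrite mcliquesB // !in_setU.
case/orP => [a1|/imsetP[K1 k1 ->]]; case/orP => [a2|/imsetP[K2 k2 ->]] h.
- exact: sepA.
- by have := meetA_small _ K2 (mcliques_sub a1); lia.
- by have := meetA_small _ K1 (mcliques_sub a2); rewrite setIC; lia.
- case/setIdP: k1 => mK1 _; case/setIdP: k2 => mK2 _.
  suff -> : K1 = K2 by [].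
  apply: mcliques_Bh_eq => //; apply: leq_trans (leq_pred _) (leq_trans h _).
  exact: subset_leq_card (setISS (trim_sub _) (trim_sub _)).
Qed.

Lemma disjoint_mcliquesA_trims : [disjoint mcliques n A & trims].
Proof.
rewrite -setI_eq0; apply/eqP/setP => M; rewrite in_setI in_set0.
apply/negbTE/negP => /andP[mA /imsetP[K]]; rewrite inE => /andP[_ nK] eM.
by have := trim_notA nK; rewrite -eM (mcliques_sub mA).
Qed.

(* For n = 1 the only maximal clique is the set of loops, and the loops of B are those of A
   together with trim K = K :\: A0. *)
Lemma sum_scardB1 Y : n = 1%N ->
  (\sum_(M in mcliques n B) scard (M :&: Y) =
   \sum_(M in mcliques n A) scard (M :&: Y) + \sum_(K in mcliques n Bh) scard (trim K :&: Y))%N.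
Proof.
move=> n1; rewrite (sum_scard1 n1 _ wfB) (sum_scard1 n1 _ wfA) /=.
case: (set_0Vmem (mcliques n Bh)) => [e0|[K0 m0]].
  by rewrite /relB e0 !big_set0 setU0 addn0.
have eK0 : mcliques n Bh = [set K0].
  apply/setP => K; rewrite in_set1.
  by apply/idP/eqP => [mK|->] //; exact: (mclique_unique1 n1 mK m0).
have core0 : core K0 = set0.
  by have [_ c] := coreP K0; apply: cards0_eq; rewrite c n1 min0n.
have -> : [set x | [set x] \in relB] = [set x | [set x] \in rel A] :|: trim K0.
  apply/setP => x; rewrite /relB eK0 big_set1 !inE.
  by rewrite sub1set cards1 n1 eqxx andbT !inE.
rewrite eK0 big_set1 setIUl cardsU.
have -> : [set x | [set x] \in rel A] :&: Y :&: (trim K0 :&: Y) = set0.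
  apply/setP => x; rewrite !in_setI in_set0 [x \in [set x | _]]inE.
  apply/negbTE/negP => /andP[/andP[xA _] /andP[xK _]].
  have [_ /subsetP /(_ x)] := wf_rel wfA xA; rewrite set11 => /(_ isT) xA0.
  have : x \in trim K0 :&: A0 by rewrite in_setI xK xA0.
  by rewrite trimIA core0 in_set0.
by rewrite cards0 subn0 /scard n1 subn0.
Qed.

Lemma sum_scardB Y :
  (\sum_(M in mcliques n B) scard (M :&: Y) =
   \sum_(M in mcliques n A) scard (M :&: Y) + \sum_(K in mcliques n Bh) scard (trim K :&: Y))%N.
Proof.
have [n1|n2] : n = 1%N \/ (1 < n)%N by lia.
  exact: sum_scardB1.
rewrite mcliquesB // (@eq_bigl _ _ _ _ _ _ [predU mcliques n A & trims]); last first.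
  by move=> M; rewrite in_setU.
rewrite bigU /=; last exact: disjoint_mcliquesA_trims.
congr (_ + _)%N; rewrite /trims big_imset /=; last first.
  move=> K1 K2 /setIdP[m1 nK1] /setIdP[m2 nK2] e.
  apply: mcliques_Bh_eq => //; apply: leq_trans (leq_pred _) (leq_trans nK1 _).
  by apply: subset_leq_card; rewrite subsetI trim_sub /= e trim_sub.
apply/esym; rewrite (bigID (fun K => n <= #|trim K|)%N) /= [X in (_ + X)%N]big1 ?addn0.
  by apply: eq_bigl => K; rewrite !inE.
move=> K /andP[_]; rewrite -ltnNge => h; apply: scard_small.
by apply: leq_ltn_trans h; apply: subset_leq_card; apply: subsetIl.
Qed.

Lemma deltaB Y : Y \subset Bc -> delta n (induced B Y) = #|Y|%:Z -
  (\sum_(M in mcliques n A) scard (M :&: Y))%N%:Z -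
  (\sum_(K in mcliques n Bh) scard (trim K :&: Y))%N%:Z.
Proof. by move=> YB; rewrite (delta_induced sepB) //= sum_scardB PoszD opprD addrA. Qed.

Lemma sum_scardA_le Z : Z \subset A0 ->
  (\sum_(M in mcliques n A) scard (M :&: Z) + minn #|Z| n.-1 <= #|Z|)%N.
Proof. by move=> ZA; have := delta_A_ge ZA; rewrite delta_induced //; [lia | exact: sepA]. Qed.

(* The maximal cliques of A inside K meet Y only in K :&: Y :&: A0, where purity of A bounds
   their total excess. *)
Lemma scard_trim_le K Y : K \in mcliques n Bh ->
  (\sum_(M in mcliques n A) (if M \subset K then scard (M :&: Y) else 0) +
   scard (trim K :&: Y) <= scard (K :&: Y))%N.
Proof.
move=> mK; set Z := K :&: Y :&: A0.
have MYZ M : M \in mcliques n A -> M \subset K -> M :&: Y = M :&: Z.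
  move=> mM MK; apply/setP => x; rewrite !in_setI; case xM: (x \in M) => //=.
  by rewrite (subsetP MK x xM) (subsetP (mcliques_sub mM) x xM) andbT.
have sumZ : (\sum_(M in mcliques n A) (if M \subset K then scard (M :&: Y) else 0)
    <= \sum_(M in mcliques n A) scard (M :&: Z))%N.
  by apply: leq_sum => M mM; case: ifP => // MK; rewrite MYZ.
have := sum_scardA_le (subsetIr _ A0 : Z \subset A0).
have := subset_leq_card (setSI Y (trim_sub K)).
have := card_trimI K Y; have := cardI_splitA K Y; rewrite -/Z.
move: sumZ; rewrite /scard; lia.
Qed.

Lemma delta_Bh_le_B Y : Y \subset Bc -> delta n (induced Bh Y) <= delta n (induced B Y).
Proof.
move=> YB; rewrite deltaB // delta_induced //; last exact: sepBh.
suff : (\sum_(M in mcliques n A) scard (M :&: Y) +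
        \sum_(K in mcliques n Bh) scard (trim K :&: Y)
   <= \sum_(K in mcliques n Bh) scard (K :&: Y))%N by lia.
rewrite (@sum_by_mcliques_Bh (mcliques n A) (fun M => scard (M :&: Y))); last first.
  move=> M mM; split; first by have := mcliques_card mM; lia.
  exact: clique_mclique (cliqueA_Bh (mcliques_clique mM)).
by rewrite -big_split /=; apply: leq_sum => K mK; apply: scard_trim_le.
Qed.

(* The only maximal clique of A^geo inside K is K :&: A0, when it has n points. *)
Lemma scard_trim_Ag_le K X : A0 \subset X -> K \in mcliques n Bh ->
  (\sum_(L in mcliques n Ag) (if L \subset K then scard L else 0) +
   scard (trim K :&: X) <= scard (K :&: X))%N.
Proof.
move=> AX mK; case: (ltnP #|K :&: A0| n) => h.
  rewrite big1 ?add0n; first by apply: leq_scard; apply: setSI; apply: trim_sub.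
  move=> L mL; case: ifP => // LK; apply: scard_small; apply: leq_ltn_trans h.
  by apply: subset_leq_card; rewrite subsetI LK -carrier_Ag (mcliques_sub mL).
have sumK : (\sum_(L in mcliques n Ag) (if L \subset K then scard L else 0) <=
   (if K :&: A0 \subset K then scard (K :&: A0) else 0))%N.
  apply: leq_sum_single => L mL; case: ifP => // LK _.
  have /maxcliqueP[_ Lmax] := mcliques_maxclique mL.
  apply/esym; apply: Lmax; first exact: cliqueAg_meetA.
  by rewrite subsetI LK -carrier_Ag (mcliques_sub mL).
rewrite subsetIl in sumK.
have := card_trimI K X; have := cardI_splitA K X.
rewrite -setIA (setIidPr AX); move: sumK h; rewrite /scard; lia.
Qed.

Lemma delta_A_le_B X : A0 \subset X -> X \subset Bc -> delta n A <= delta n (induced B X).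
Proof.
move=> AX XB; rewrite deltaB // deltaE.
have := delta_Ag_le AX XB; rewrite deltaE carrier_Ag delta_induced //; last exact: sepBh.
have -> : (\sum_(M in mcliques n A) scard (M :&: X) = \sum_(M in mcliques n A) scard M)%N.
  by apply: eq_bigr => M mM; rewrite (setIidPl (subset_trans (mcliques_sub mM) AX)).
suff : (\sum_(L in mcliques n Ag) scard L + \sum_(K in mcliques n Bh) scard (trim K :&: X)
   <= \sum_(K in mcliques n Bh) scard (K :&: X))%N by lia.
rewrite (@sum_by_mcliques_Bh (mcliques n Ag) scard); last first.
  move=> L mL; split; first by have := mcliques_card mL; lia.
  exact: clique_mclique (cliqueAg_Bh (mcliques_clique mL)).
by rewrite -big_split /=; apply: leq_sum => K mK; apply: scard_trim_Ag_le.
Qed.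

Lemma delta_B1_le b X : [set b] \subset X -> X \subset Bc ->
  delta n (induced B [set b]) <= delta n (induced B X).
Proof.
move=> bX XB; have bB : [set b] \subset Bc := subset_trans bX XB.
have [n1|n2] : n = 1%N \/ (1 < n)%N by lia.
  rewrite !(delta_induced sepB) //= !(sum_scard1 n1 _ wfB) /=.
  set L := [set x | [set x] \in relB].
  have := cardsUI (L :&: X) [set b].
  have : (#|L :&: X :|: [set b]| <= #|X|)%N.
    by apply: subset_leq_card; rewrite subUset subsetIr bX.
  have : (#|L :&: X :&: [set b]| <= #|L :&: [set b]|)%N.
    by apply: subset_leq_card; apply: setSI; apply: subsetIl.
  by rewrite cards1; lia.
rewrite delta_small ?cards1 //.
have := delta_Bh_le_B XB; have := delta_Bh_ge XB.
have : (1 <= #|X|)%N by apply: leq_trans (subset_leq_card bX); rewrite cards1.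
lia.
Qed.

(* Submodularity, with the independent set C inside W :&: Y, keeps delta at most n-1. *)
Lemma closure_cover_step C W a : C \subset A0 -> #|C| = n.-1 ->
  W \subset A0 -> C \subset W -> delta n (induced A W) <= (n.-1)%:Z -> a \in cl n A C ->
  exists W', [/\ W' \subset A0, W \subset W', a \in W' & delta n (induced A W') <= (n.-1)%:Z].
Proof.
move=> CA cC WA CW dW; rewrite inE => /andP[aA /eqP da].
have CaA : C :|: [set a] \subset A0 by rewrite subUset CA sub1set.
have [Y [CaY YA dY]] := dim_witness CaA.
rewrite da indepA // in dY.
exists (W :|: Y); split; rewrite ?subUset ?WA ?YA ?subsetUl //.
  by rewrite inE (subsetP CaY) ?orbT // !inE eqxx orbT.
have WYA : W :&: Y \subset A0 by rewrite (subset_trans (subsetIl _ _)).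
have := delta_A_ge WYA; have := delta_submod sepA WA YA.
have : (n.-1 <= #|W :&: Y|)%N.
  by rewrite -cC; apply: subset_leq_card; rewrite subsetI CW (subset_trans (subsetUl _ _) CaY).
move: dW dY; lia.
Qed.

Lemma closure_cover C : C \subset A0 -> #|C| = n.-1 -> exists W,
  [/\ W \subset A0, cl n A C \subset W & delta n (induced A W) <= (n.-1)%:Z].
Proof.
move=> CA cC.
suff cover (s : seq T) : {subset s <= cl n A C} -> exists W, [/\ W \subset A0, C \subset W,
    {subset s <= W} & delta n (induced A W) <= (n.-1)%:Z].
  have [W [WA _ sW dW]] := cover (enum (cl n A C)) ltac:(by move=> a; rewrite mem_enum).
  by exists W; split => //; apply/subsetP => a; rewrite -mem_enum; apply: sW.
elim: s => [_|a s IH sub].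
  by exists C; split => //; rewrite delta_small cC // ltn_predL.
have [W [WA CW sW dW]] := IH (fun x xs => sub x (@mem_behead _ (a :: s) x xs)).
have [W' [W'A WW' aW' dW']] := closure_cover_step CA cC WA CW dW (sub a (mem_head a s)).
exists W'; split => //; first exact: subset_trans CW WW'.
by move=> x; rewrite in_cons => /predU1P[->|/sW/(subsetP WW')].
Qed.

Lemma trim_cover K : K \in mcliques n Bh -> exists W, [/\ W \subset A0, K :&: A0 \subset W &
  delta n (induced A W) + (#|K :\: A0|)%:Z <= (n.-1 + scard (trim K))%N%:Z].
Proof.
move=> mK; have cardK := cardsID A0 K; rewrite /scard card_trim.
case: (ltnP #|K :&: A0| n) => KA.
  exists (K :&: A0); split; rewrite ?subsetIr ?delta_small //.
  by have := mcliques_card mK; lia.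
have [L mL KL] := clique_mclique (cliqueAg_meetA mK KA).
move: mL; rewrite mcliques_Ag => /imsetP[C]; rewrite !inE => /andP[CA /andP[cC _]] eL.
have [W [WA clW dW]] := closure_cover CA ltac:(by move/eqP: cC; lia).
by exists W; split; rewrite ?(subset_trans KL) ?eL //; lia.
Qed.

Lemma dimB_mclique_le K X : K \in mcliques n Bh -> X \subset K -> dim n B X <= (n.-1)%:Z.
Proof.
move=> mK XK; have [W [WA KW dW]] := trim_cover mK.
have KB := mcliques_sub mK.
have KWB : K :|: W \subset Bc by rewrite subUset KB (subset_trans WA sub_A_Bh).
apply: le_trans (dim_le_delta (S := B) KWB (subset_trans XK (subsetUl _ _))) _.
rewrite deltaB //.
have : (#|K :|: W| <= #|W| + #|K :\: A0|)%N.
  apply: leq_trans (_ : #|W :|: (K :\: A0)| <= _)%N; last by rewrite cardsU leq_subr.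
  apply/subset_leq_card/subsetP => x; rewrite !in_setU in_setD.
  case/orP => [xK|->]; last by rewrite orTb.
  case xA: (x \in A0); last by rewrite xK orbT.
  by rewrite (subsetP KW) // in_setI xK xA.
have : (\sum_(M in mcliques n A) scard (M :&: W) <=
        \sum_(M in mcliques n A) scard (M :&: (K :|: W)))%N.
  by apply: leq_sum => M _; apply/leq_scard/setIS/subsetUr.
have := delta_induced sepA WA.
have : (scard (trim K) <= \sum_(J in mcliques n Bh) scard (trim J :&: (K :|: W)))%N.
  rewrite (bigD1 K) //= (setIidPl (subset_trans (trim_sub K) (subsetUl _ _))).
  exact: leq_addr.
move: dW; lia.
Qed.

Lemma dimB_ge X : X \subset Bc -> (n.-1 <= #|X|)%N -> (n.-1)%:Z <= dim n B X.
Proof.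
move=> XB hX; apply: dim_ge => [|Y YB XY].
  by have := delta_Bh_le_B XB; have := delta_Bh_ge XB; lia.
have := delta_Bh_le_B YB; have := delta_Bh_ge YB.
by have := subset_leq_card XY; lia.
Qed.

Lemma dimB_le_mclique X : X \subset Bc -> (n <= #|X|)%N -> dim n B X <= (n.-1)%:Z ->
  exists2 K, K \in mcliques n Bh & X \subset K.
Proof.
move=> XB nX dX; have [Y [XY YB dY]] := dim_witness (S := B) XB.
have nY : (n <= #|Y|)%N by apply: leq_trans nX (subset_leq_card XY).
have [K mK YK] := geometric_mclique YB nY ltac:(have := delta_Bh_le_B YB; lia).
by exists K => //; apply: subset_trans XY YK.
Qed.

Lemma dimB_indep X : X \subset Bc -> #|X| = n.-1 -> dim n B X = (n.-1)%:Z.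
Proof.
move=> XB cX; apply/eqP; rewrite eq_le dimB_ge ?cX // andbT.
by apply: le_trans (dim_le_delta_self _ _) _; rewrite delta_small cX ?ltn_predL.
Qed.

Lemma clB_mclique K C : K \in mcliques n Bh -> C \subset K -> #|C| = n.-1 -> cl n B C = K.
Proof.
move=> mK CK cC; have KB := mcliques_sub mK; have CB := subset_trans CK KB.
apply/setP => a; rewrite inE /= (dimB_indep CB cC).
case aC: (a \in C).
  have -> : C :|: [set a] = C by apply/setUidPl; rewrite sub1set.
  by rewrite (dimB_indep CB cC) eqxx andbT (subsetP KB) // (subsetP CK).
have cCa : #|C :|: [set a]| = n by rewrite setUC cardsU1 aC cC /=; lia.
case aK: (a \in K).
  rewrite (subsetP KB a aK) /=; apply/eqP; apply/le_anti/andP; split.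
    by apply: dimB_mclique_le mK _; rewrite subUset CK sub1set.
  by apply: dimB_ge; rewrite ?subUset ?CB ?sub1set ?(subsetP KB a aK) // cCa leq_pred.
apply/negbTE/negP => /andP[aB /eqP d].
have CaB : C :|: [set a] \subset Bc by rewrite subUset CB sub1set.
have [K2 mK2 CaK2] := dimB_le_mclique CaB ltac:(by rewrite cCa) ltac:(by rewrite d).
have eK : K = K2.
  apply: mcliques_Bh_eq => //; rewrite -cC; apply: subset_leq_card.
  by rewrite subsetI CK (subset_trans (subsetUl _ _) CaK2).
by move: aK; rewrite eK (subsetP CaK2) // !inE eqxx orbT.
Qed.

Lemma CclqB : Cclq n B.
Proof.
apply/andP; split; first by apply/Cclq0P; split; [exact: wfB | exact: sepB].
apply/forall_inP => b bB; apply/strongP; split => [|X]; last exact: delta_B1_le.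
by rewrite /substructure /= sub1set bB eqxx.
Qed.

Lemma strongAB : strong n A B.
Proof.
apply/strongP; split; last exact: delta_A_le_B.
by rewrite /substructure /= sub_A_Bh relB_A eqxx.
Qed.

Lemma pureB : pure n B (n%:Z - 1).
Proof.
split; first lia; split => [X XB cX|].
  have cX' : #|X| = n.-1 by lia.
  by rewrite /indep (dimB_indep XB cX') cX'.
have [X [XA cX dX]] := depA; have XB := subset_trans XA sub_A_Bh.
exists X; split; rewrite ?cX //; first lia.
have [Y [XY YA dY]] := dim_witness XA.
have dBA : dim n B X <= dim n A X.
  by rewrite dY -inducedB_A //; apply: dim_le_delta => //=; apply: subset_trans YA sub_A_Bh.
have dAn : dim n A X <= n%:Z.
  by have := le_trans (dim_le_delta_self A X) (delta_le_card _); rewrite /= cX.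
by apply: contra dX => /eqP dB; apply/eqP; lia.
Qed.

Lemma mcliques_Bh_cl K : K \in mcliques n Bh -> exists2 C,
  C \in [set C in powerset Bc | (#|C|%:Z == n%:Z - 1) && (cl n B C != C)] & K = cl n B C.
Proof.
move=> mK; have nK := mcliques_card mK.
have [C [_ CK cC]] := @exists_card_between n.-1 set0 K (sub0set K)
   ltac:(by rewrite cards0 /= (leq_trans (leq_pred n) nK)).
rewrite -(clB_mclique mK CK cC); exists C => //.
rewrite !inE (subset_trans CK (mcliques_sub mK)) (clB_mclique mK CK cC) /= cC.
apply/andP; split; first by apply/eqP; lia.
by apply: contraTneq nK => ->; rewrite cC -ltnNge ltn_predL.
Qed.

Lemma cl_mcliques_Bh C : C \subset Bc -> #|C| = n.-1 -> cl n B C != C ->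
  cl n B C \in mcliques n Bh.
Proof.
move=> CB cC ncl.
have Ccl : C \subset cl n B C.
  apply/subsetP => a aC; rewrite inE (subsetP CB a aC) /=.
  by have -> : C :|: [set a] = C by apply/setUidPl; rewrite sub1set.
have [a acl aC] : exists2 a, a \in cl n B C & a \notin C.
  by apply/subsetPn; apply: contra ncl => h; rewrite eqEsubset h Ccl.
move: acl; rewrite inE /= (dimB_indep CB cC) => /andP[aB /eqP d].
have cCa : #|C :|: [set a]| = n by rewrite setUC cardsU1 (negbTE aC) cC /=; lia.
have CaB : C :|: [set a] \subset Bc by rewrite subUset CB sub1set.
have [K mK CaK] := dimB_le_mclique CaB ltac:(by rewrite cCa) ltac:(by rewrite d).
by rewrite (clB_mclique mK (subset_trans (subsetUl _ _) CaK) cC).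
Qed.

Lemma geo_ofB : geo_of n B Bh.
Proof.
split => //; first exact: wfBh.
apply/setP => K; apply/idP/imsetP => [/mcliques_Bh_cl //|[C /setIdP[]]].
rewrite powersetE => CB /andP[/eqP cC ncl] ->.
by apply: cl_mcliques_Bh => //; lia.
Qed.

End Amalgamation.

End CliqueStructures.

Theorem mainTheorem4 (n : nat) (T : finType) (A Bh : structure T) :
  Cclq n A ->
  pure n A (n%:Z - 1) ->
  Cgeo n Bh ->
  (exists Ag : structure T, geo_of n A Ag /\ strong n Ag Bh) ->
  exists B : structure T,
    [/\ Cclq n B, strong n A B, pure n B (n%:Z - 1) & geo_of n B Bh].
Proof.
move=> CclqA pureA CgeoBh [Ag [geoA Ag_Bh]].
have n_gt0 : (0 < n)%N by case: pureA => ? _; lia.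
exists (Struc (carrier Bh) (relB n A Bh)).
split.
- exact: (CclqB n_gt0 CclqA pureA CgeoBh geoA Ag_Bh).
- exact: (strongAB n_gt0 CclqA pureA CgeoBh geoA Ag_Bh).
- exact: (pureB n_gt0 CclqA pureA CgeoBh geoA Ag_Bh).
- exact: (geo_ofB n_gt0 CclqA pureA CgeoBh geoA Ag_Bh).
Qed.
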